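(* Let $\Gamma$ be a free group on two generators $\xi,\eta$ and let $k\ge 2$. Let $\Psi^k$ be the set of reduced words of length exactly $k$. Call a pair $(\gamma,\psi)$ a group-theoretical relation of level $k$ if $\gamma\in\Gamma\setminus\{1\}$ has reduced length $|\gamma|\le k$, $\psi\in\Psi^k$, and the reduced length of the product satisfies $|\gamma\psi|\le k$. Then the number of group-theoretical relations of level $k$ equals $R_k=4\cdot r_k\cdot 3^{k-1}$, where $$r_k=1+\sum_{i=1}^{k-1}\Bigl(1+2\sum_{j=1}^{\min\{i,k-i\}}3^{j-1}\Bigr),$$ and equivalently $r_k=\sum_{j=0}^{k}a_j$ with $a_0=a_1=1$, $a_j=1+2\sum_{i=1}^{\lfloor j/2\rfloor}3^{i-1}$ for $2\le j\le k-1$, and $a_k=2\sum_{i=1}^{\lfloor k/2\rfloor}3^{i-1}$.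
   Context: $|w|$ denotes the length of the reduced word representing $w$ in the free basis $\{\xi,\eta\}$. (For example, for $k=2$ there are $48$ such relations.) *)

From mathcomp Require Import all_boot.
Set Implicit Arguments. Unset Strict Implicit. Unset Printing Implicit Defensive.

(* Letters of the free group on two generators xi, eta:
   (false,false) = xi, (false,true) = xi^-1, (true,false) = eta, (true,true) = eta^-1. *)
Definition letter := (bool * bool)%type.
Definition linv (x : letter) : letter := (x.1, ~~ x.2).

Fixpoint reduced (w : seq letter) : bool :=
  match w with
  | x :: ((y :: _) as t) => (y != linv x) && reduced t
  | _ => true
  end.

Definition fred (w : seq letter) : seq letter :=
  foldr (fun x acc => match acc with
                      | y :: t => if y == linv x then t else x :: acc
                      | [::] => [:: x]
                      end) [::] w.

Definition gmul (g p : seq letter) : seq letter := fred (g ++ p).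

Definition is_rel (k : nat) (g p : seq letter) : bool :=
  [&& reduced g, g != [::], size g <= k,
      reduced p, size p == k & size (gmul g p) <= k].

(* Number of relations of level k; gamma ranges over words of length l, 1 <= l <= k,
   psi over words of length k (tuples make the sets finite). *)
Definition num_rel (k : nat) : nat :=
  \sum_(1 <= l < k.+1)
     #|[set gp : l.-tuple letter * k.-tuple letter | is_rel k (tval gp.1) (tval gp.2)]|.

Definition r_k (k : nat) : nat :=
  1 + \sum_(1 <= i < k) (1 + 2 * \sum_(1 <= j < (minn i (k - i)).+1) 3 ^ (j - 1)).

Definition a_j (k j : nat) : nat :=
  if j <= 1 then 1
  else if j < k then 1 + 2 * \sum_(1 <= i < (j./2).+1) 3 ^ (i - 1)
  else 2 * \sum_(1 <= i < (k./2).+1) 3 ^ (i - 1).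

From mathcomp Require Import all_boot zify.
Set Implicit Arguments. Unset Strict Implicit.

(* Write gamma = rev u and psi = q^-1 with u, q reduced of lengths l and k.  The
   product gamma psi cancels exactly along the longest common prefix of u and q, so
   |gamma psi| = l + k - 2 lcp(u, q), and (gamma, psi) is a relation iff
   lcp(u, q) >= ceil(l/2).  Pairs of reduced words of lengths l, k sharing a prefix of
   length m >= 1 number 4 * 3^(l+k-m-1), which gives 4 * 3^(k-1) * 3^floor(l/2)
   relations with |gamma| = l.  Both descriptions of r_k evaluate to
   sum_{l=1}^k 3^floor(l/2): each a_j is 3^floor(j/2) by the geometric series, and
   r_k satisfies the same recurrence x(k+2) = 3 x(k) + 4. *)

Fixpoint lcp (T : eqType) (s t : seq T) : nat :=
  match s, t with
  | x :: s', y :: t' => if x == y then (lcp s' t').+1 else 0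
  | _, _ => 0
  end.

Definition head_in (A : {pred letter}) (s : seq letter) : bool :=
  if s is x :: _ then x \in A else true.

Lemma linvK : involutive linv.
Proof. by case=> a b; rewrite /linv /= negbK. Qed.

Lemma eq_linv_sym (x y : letter) : (y == linv x) = (x == linv y).
Proof. by apply/eqP/eqP => ->; rewrite linvK. Qed.

Lemma reduced_cons x s : reduced (x :: s) = head_in (predC1 (linv x)) s && reduced s.
Proof. by case: s. Qed.

Lemma reduced_sorted s : reduced s = sorted (fun x y => y != linv x) s.
Proof. by elim: s => // x [|y s] //= ->. Qed.

Lemma reduced_rev s : reduced (rev s) = reduced s.
Proof.
rewrite !reduced_sorted rev_sorted; case: s => //= x s.
by apply: eq_path => a b; rewrite eq_linv_sym.
Qed.

Lemma reduced_map_linv s : reduced (map linv s) = reduced s.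
Proof. by elim: s => // x [|y s] //= ->; rewrite (inj_eq (can_inj linvK)). Qed.

Lemma head_in_predT s : head_in predT s.
Proof. by case: s. Qed.

Lemma head_in_lcp (A : {pred letter}) s t :
  0 < lcp s t -> head_in A s = head_in A t.
Proof. by case: s t => [|x s] [|y t] //=; case: eqP => // ->. Qed.

Definition fred_step (x : letter) (acc : seq letter) : seq letter :=
  if acc is y :: t then (if y == linv x then t else x :: acc) else [:: x].

Lemma fred_reduced s : reduced s -> fred s = s.
Proof.
elim: s => // x s IH; rewrite reduced_cons => /andP[hx hs].
rewrite /fred /= -/(fred s) IH //.
by case: s hx {IH hs} => //= y t; rewrite inE => /negbTE ->.
Qed.

Lemma fred_cat s t : reduced t -> fred (s ++ t) = foldr fred_step t s.
Proof. by move=> ht; rewrite /fred foldr_cat -/(fred t) fred_reduced. Qed.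

Lemma size_foldr_fred_step u q : reduced u -> reduced q ->
  size (foldr fred_step (map linv q) (rev u)) + 2 * lcp u q = size u + size q.
Proof.
elim: u q => [|x u IH] q; first by rewrite /= size_map addn0.
rewrite reduced_cons => /andP[hxu hu] hq; rewrite rev_cons foldr_rcons.
have lcp_u0 t : lcp u (linv x :: t) = 0.
  by case: u hxu {IH hu} => //= y u; rewrite inE => /negbTE ->.
case: q hq => [|y t] hq /=.
  by have := IH [:: linv x] hu isT; rewrite lcp_u0 /= linvK; lia.
rewrite (inj_eq (can_inj linvK)) eq_sym.
case: eqP => [_|/eqP hxy].
  by move: hq; rewrite reduced_cons => /andP[_ /(IH t hu)]; lia.
have hq' : reduced (linv x :: y :: t) by rewrite /= linvK eq_sym hxy.
by have := IH _ hu hq'; rewrite lcp_u0 /= linvK; lia.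
Qed.

Lemma size_gmul_rev_linv u q : reduced u -> reduced q ->
  size (gmul (rev u) (map linv q)) + 2 * lcp u q = size u + size q.
Proof.
move=> hu hq; rewrite /gmul fred_cat ?reduced_map_linv //.
exact: size_foldr_fred_step.
Qed.

Section TupleSums.

Variables (R : Type) (idx : R) (op : Monoid.com_law idx) (T : finType).

Lemma big_tuple0 (F : seq T -> R) : \big[op/idx]_(t : 0.-tuple T) F t = F [::].
Proof. by rewrite (big_pred1 [tuple]) // => t; apply/esym/eqP; exact: tuple0. Qed.

Lemma big_tupleS n (F : seq T -> R) :
  \big[op/idx]_(t : n.+1.-tuple T) F t =
  \big[op/idx]_(x : T) \big[op/idx]_(t : n.-tuple T) F (x :: t).
Proof.
rewrite pair_bigA (reindex (fun p : T * n.-tuple T => [tuple of p.1 :: p.2])) /=.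
  by apply: eq_bigr => -[x t].
exists (fun t : n.+1.-tuple T => (thead t, [tuple of behead t])) => [[x t] _|t _].
  by congr pair; apply: val_inj.
by rewrite [t]tuple_eta; apply: val_inj.
Qed.

End TupleSums.

Lemma card_letter : #|{: letter}| = 4.
Proof. by rewrite card_prod card_bool. Qed.

Lemma card_predC1_letter (z : letter) : #|predC1 z| = 3.
Proof. by rewrite cardC1 card_letter. Qed.

Lemma sum_head_in_reduced n (z : letter) :
  \sum_(u : n.-tuple letter) (head_in (predC1 z) u && reduced u) = 3 ^ n.
Proof.
elim: n z => [|n IH] z; set F := fun s => nat_of_bool (head_in (predC1 z) s && reduced s).
  by rewrite (big_tuple0 _ F).
rewrite (big_tupleS _ _ F) expnS -{1}(card_predC1_letter z) -sum1_card big_distrl /=.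
rewrite [RHS]big_mkcond /=; apply: eq_bigr => x _; rewrite -(IH (linv x)).
by case: ifP => hx; rewrite ?mul1n ?mul0n; [apply: eq_bigr|apply: big1] => u _;
  rewrite /F reduced_cons /= ?hx.
Qed.

Lemma sum_common_head l k m (F : seq letter -> seq letter -> bool) :
  \sum_(u : l.+1.-tuple letter) \sum_(q : k.+1.-tuple letter) (F u q && (m < lcp u q)) =
  \sum_(x : letter) \sum_(u : l.-tuple letter) \sum_(q : k.-tuple letter)
    (F (x :: u) (x :: q) && (m <= lcp u q)).
Proof.
pose G u q := nat_of_bool (F u q && (m < lcp u q)).
rewrite (big_tupleS _ _ (fun u => \sum_(q : k.+1.-tuple letter) G u q)).
apply: eq_bigr => x _.
under eq_bigr do rewrite (big_tupleS _ _ (G _)).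
rewrite exchange_big (bigD1 x) //= [X in _ + X]big1 ?addn0 => [|y hyx].
  by apply: eq_bigr => u _; apply: eq_bigr => q _; rewrite /G /= eqxx.
by apply: big1 => u _; apply: big1 => q _; rewrite /G /= eq_sym (negbTE hyx) andbF.
Qed.

Lemma sum_common_prefix (A : {pred letter}) m l k : 0 < m -> m <= l -> m <= k ->
  \sum_(u : l.-tuple letter) \sum_(q : k.-tuple letter)
     ([&& head_in A u, reduced u & reduced q] && (m <= lcp u q)) =
  #|A| * 3 ^ (l + k - m).-1.
Proof.
elim: m A l k => [//|m IH] A [//|l] [//|k] _ hl hk.
rewrite (sum_common_head _ _ _ (fun u q => [&& head_in A u, reduced u & reduced q])).
have tails x : \sum_(u : l.-tuple letter) \sum_(q : k.-tuple letter)
    ([&& head_in (predC1 (linv x)) u, reduced u, head_in (predC1 (linv x)) q & reduced q]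
     && (m <= lcp u q)) = 3 ^ (l + k - m).
  case: m IH hl hk => [|m] IH hl hk.
    rewrite subn0 expnD -!(sum_head_in_reduced _ (linv x)) big_distrl /=.
    apply: eq_bigr => u _; rewrite big_distrr /=; apply: eq_bigr => q _.
    by rewrite mulnb andbT andbA.
  have -> : 3 ^ (l + k - m.+1) = 3 * 3 ^ (l + k - m.+1).-1.
    by rewrite -expnS; congr (_ ^ _); lia.
  rewrite -{1}(card_predC1_letter (linv x)) -IH //.
  apply: eq_bigr => u _; apply: eq_bigr => q _.
  case: (ltnP m (lcp u q)) => hm; rewrite ?andbF //.
  rewrite -(head_in_lcp _ (leq_ltn_trans (leq0n m) hm)).
  by case: (head_in _ u); case: (reduced u).
rewrite -sum_nat_const [RHS]big_mkcond; apply: eq_bigr => x _.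
have -> : (l.+1 + k.+1 - m.+1).-1 = l + k - m by lia.
rewrite -(tails x); case: ifP => hx.
  apply: eq_bigr => u _; apply: eq_bigr => q _.
  by rewrite !reduced_cons [head_in A _]/= hx !andbA.
by apply: big1 => u _; apply: big1 => q _; rewrite /= hx.
Qed.

Lemma is_rel_rev_map_linv k u q : 0 < size u <= k -> size q = k ->
  is_rel k (rev u) (map linv q) = [&& reduced u, reduced q & uphalf (size u) <= lcp u q].
Proof.
move=> /andP[hu0 huk] hq; rewrite /is_rel reduced_rev reduced_map_linv size_rev size_map hq.
rewrite -size_eq0 size_rev -lt0n hu0 huk eqxx /=.
case hu: (reduced u) => //; case hq': (reduced q) => //=.
have := size_gmul_rev_linv hu hq'; rewrite hq leq_uphalf_double -addnn; lia.
Qed.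

Lemma rev_tuple_inj n (T : Type) : injective (@rev_tuple n T).
Proof. by move=> s t /(congr1 (rev \o val)) /=; rewrite !revK; apply: val_inj. Qed.

Lemma map_linv_tuple_inj n : injective (@map_tuple n _ _ linv).
Proof.
by move=> s t /(congr1 (map linv \o val)) /=; rewrite !(mapK linvK); apply: val_inj.
Qed.

Lemma card_rel_of_size l k : 0 < l <= k ->
  #|[set gp : l.-tuple letter * k.-tuple letter | is_rel k gp.1 gp.2]| =
  4 * 3 ^ (k.-1 + l./2).
Proof.
move=> /andP[hl hlk]; rewrite -sum1_card big_mkcond /=.
pose rel (g : l.-tuple letter) (p : k.-tuple letter) := nat_of_bool (is_rel k g p).
rewrite (eq_bigr (fun gp => rel gp.1 gp.2)) => [|gp _]; last by rewrite inE.
rewrite -(pair_bigA _ rel) /=.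
rewrite (reindex_inj (@rev_tuple_inj l letter)) /=.
under eq_bigr do rewrite (reindex_inj (@map_linv_tuple_inj k)) /=.
have hm0 : 0 < uphalf l by rewrite uphalf_gt0.
have hm : uphalf l <= l by rewrite leq_uphalf_double -addnn leq_addr.
have -> : k.-1 + l./2 = (l + k - uphalf l).-1.
  by have := odd_double_half l; rewrite uphalf_half; lia.
rewrite -card_letter -(sum_common_prefix predT hm0 hm (leq_trans hm hlk)).
apply: eq_bigr => u _; apply: eq_bigr => q _.
rewrite /rel is_rel_rev_map_linv ?size_map ?size_tuple ?hl ?hlk //.
by rewrite head_in_predT !andbA.
Qed.

Lemma num_rel_half_sum k : num_rel k = 4 * 3 ^ k.-1 * \sum_(1 <= l < k.+1) 3 ^ l./2.
Proof.
rewrite /num_rel big_distrr /=; apply: eq_big_nat => l hl.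
by rewrite card_rel_of_size // expnD mulnA.
Qed.

Lemma geom_sum3 n : 1 + 2 * \sum_(1 <= i < n.+1) 3 ^ (i - 1) = 3 ^ n.
Proof.
elim: n => [|n IH]; first by rewrite big_geq.
rewrite big_nat_recr //= expnS subn1 /= -IH.
by move: (\sum_(_ <= _ < _) _) => S; lia.
Qed.

Lemma sum_pow3_min_rec k :
  \sum_(1 <= i < k.+3) 3 ^ minn i (k.+3 - i) =
  3 * \sum_(1 <= i < k.+1) 3 ^ minn i (k.+1 - i) + 6.
Proof.
rewrite big_ltn // big_add1 /= big_nat_recr //= big_distrr /= subSnn.
rewrite (eq_big_nat _ _ (F2 := fun i => 3 * 3 ^ minn i (k.+1 - i))) => [|i hi].
  by rewrite [minn 1 _]/minn [minn _ 1]/minn /=; lia.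
by rewrite -expnS; congr (_ ^ _); lia.
Qed.

Lemma sum_pow3_half_rec k :
  \sum_(1 <= l < k.+3) 3 ^ l./2 = 3 * \sum_(1 <= l < k.+1) 3 ^ l./2 + 4.
Proof.
rewrite big_ltn // (big_addn 0 _ 2) subn2 big_distrr /= [in LHS]big_ltn //=.
under eq_bigr => l _ do rewrite addn2 /= expnS.
lia.
Qed.

Lemma one_add_sum_pow3_min k : 0 < k ->
  1 + \sum_(1 <= i < k) 3 ^ minn i (k - i) = \sum_(1 <= l < k.+1) 3 ^ l./2.
Proof.
elim/ltn_ind: k => -[|[|[|k]]] IH // _; try by rewrite unlock.
by rewrite sum_pow3_min_rec sum_pow3_half_rec -(IH k.+1) //; lia.
Qed.

Lemma r_k_half_sum k : 0 < k -> r_k k = \sum_(1 <= l < k.+1) 3 ^ l./2.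
Proof.
move=> hk; rewrite /r_k -one_add_sum_pow3_min //; congr (1 + _).
by apply: eq_bigr => i _; rewrite geom_sum3.
Qed.

Lemma sum_a_j k : 2 <= k -> \sum_(0 <= j < k.+1) a_j k j = \sum_(1 <= l < k.+1) 3 ^ l./2.
Proof.
move=> hk; rewrite big_ltn // big_nat_recr ?(ltnW hk) // [RHS]big_nat_recr ?(ltnW hk) //=.
rewrite (eq_big_nat _ _ (F2 := fun l => 3 ^ l./2)) => [|j /andP[hj1 hjk]].
  rewrite /a_j ltnn (leqNgt k 1) hk /=.
  by have := geom_sum3 k./2; move: (\sum_(_ <= _ < _) _) => S; lia.
rewrite /a_j hjk; case: leqP => hj; first by have -> : j = 1 by lia.
by rewrite geom_sum3.
Qed.

Theorem lemma2p2 (k : nat) (hk : 2 <= k) :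
  num_rel k = 4 * r_k k * 3 ^ (k - 1) /\ r_k k = \sum_(0 <= j < k.+1) a_j k j.
Proof.
have hk0 : 0 < k by apply: ltnW.
rewrite num_rel_half_sum sum_a_j // r_k_half_sum // subn1.
by split; first rewrite mulnAC.
Qed.
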